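(* Let $n,m,k,t\ge 1$ and $r\ge 0$ be integers with $n\ge k$ and $m\ge \lceil k/t\rceil + r$. Then the minimum total storage $\sum_{i=1}^m|S_i|$ of an erasure combinatorial batch code for consecutive files with parameters $n,m,k,t,r$ equals $(r+1)n$.
   Context: Files are indexed by $X=\{1,\dots,n\}$ in their linear order, and $m$ servers store subsets $S_1,\dots,S_m\subseteq X$. The family $(S_1,\dots,S_m)$ is an erasure combinatorial batch code for consecutive files with parameters $n,m,k,t,r$ if for every set $X'=\{a,a+1,\dots,a+c-1\}\subseteq X$ of $c\le k$ consecutive indices and every subset $J\subseteq\{1,\dots,m\}$ with $|J|\ge m-r$, there exist subsets $C_j\subseteq S_j$ ($j\in J$) with $|C_j|\le t$ and $X'=\bigcup_{j\in J}C_j$. The total storage is $\sum_{i=1}^m |S_i|$. *)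

From mathcomp Require Import all_boot.
Set Implicit Arguments. Unset Strict Implicit. Unset Printing Implicit Defensive.

(* Files X = {1,...,n} are represented by 'I_n (file i+1 <-> ordinal i);
   servers {1,...,m} by 'I_m.  A code is S : 'I_m -> {set 'I_n}. *)

Definition consec (n a c : nat) : {set 'I_n} :=
  [set x : 'I_n | (a <= x) && (x < a + c)].

Definition ecbc_consec (n m k t r : nat) (S : 'I_m -> {set 'I_n}) : Prop :=
  forall (a c : nat), c <= k -> a + c <= n ->
  forall J : {set 'I_m}, m - r <= #|J| ->
  exists C : 'I_m -> {set 'I_n},
    (forall j, j \in J -> (C j \subset S j) /\ #|C j| <= t) /\
    consec n a c = \bigcup_(j in J) C j.

Definition total_storage {n m : nat} (S : 'I_m -> {set 'I_n}) : nat :=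
  \sum_(i < m) #|S i|.

Definition ceil_div (a b : nat) : nat := (a + b - 1) %/ b.
Arguments ecbc_consec : clear implicits.

(* Every file must be stored on at least r + 1 servers: otherwise erasing all
   servers that hold it (at most r of them) makes the one-file request for it
   unanswerable.  Conversely, with q = ceil(k/t), store file x on the r + 1
   servers x mod q, ..., x mod q + r.  When a set J of at least m - r servers
   survives, residue class i is read from the i-th smallest server of J, which
   lies in [i, i + r]; a window of at most k <= q t consecutive files contains at
   most t files of each residue class. *)
From mathcomp Require Import all_boot.
From mathcomp Require Import zify.
Set Implicit Arguments. Unset Strict Implicit.

Lemma card_consec n a c : a + c <= n -> #|consec n a c| = c.
Proof.
elim: c => [_|c IHc].
  apply/eqP; rewrite cards_eq0; apply/eqP/setP => x.
  by rewrite !inE addn0 ltnNge andbN.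
rewrite addnS => lt_acn.
have -> : consec n a c.+1 = Ordinal lt_acn |: consec n a c.
  apply/setP => x; rewrite !inE addnS ltnS [_ <= a + c]leq_eqVlt -val_eqE /=.
  by case: eqP => [->|_]; rewrite ?leq_addr.
by rewrite cardsU1 IHc ?(ltnW lt_acn) // inE ltnn andbF.
Qed.

Lemma card_consec_prefix n (x : 'I_n) : #|consec n 0 x| = x.
Proof. by rewrite card_consec // add0n ltnW. Qed.

Lemma sum_card_transpose (I T : finType) (S : I -> {set T}) :
  \sum_i #|S i| = \sum_x #|[set i | x \in S i]|.
Proof.
under eq_bigr do rewrite -sum1_card big_mkcond.
rewrite exchange_big; apply: eq_bigr => x _.
by rewrite -sum1_card [RHS]big_mkcond; apply: eq_bigr => i _; rewrite inE.
Qed.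

Lemma card_consec_residue_le n a c q t (i : nat) : 0 < q -> 0 < t -> c <= q * t ->
  #|[set x in consec n a c | x %% q == i]| <= t.
Proof.
case: t => [//|t] q_gt0 _ le_c_qt.
set A := [set x in _ | _].
have lt_quo x : x \in A -> (x - a) %/ q < t.+1.
  by rewrite !inE => /andP[/andP[le_ax lt_x] _]; rewrite ltn_divLR //; lia.
rewrite -[t.+1]card_ord.
apply: (@leq_card_in _ _ (fun x : 'I_n => inord ((x - a) %/ q) : 'I_t.+1)).
move=> x y Ax Ay /(congr1 val); rewrite /= !inordK ?lt_quo // => eq_quo.
move: Ax Ay; rewrite !inE => /andP[/andP[le_ax _] /eqP rx] /andP[/andP[le_ay _] /eqP ry].
have eq_rem : (x - a) %% q = (y - a) %% q.
  by apply/eqP; rewrite -(eqn_modDl a) !subnKC // rx ry.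
apply: val_inj; rewrite /= -(subnKC le_ax) -(subnKC le_ay); congr (a + _).
by rewrite (divn_eq (x - a) q) eq_quo eq_rem -divn_eq.
Qed.

Section Rank.

Variables (m : nat) (J : {set 'I_m}).

Definition rank_in (s : 'I_m) : nat := #|[set y in J | y < s]|.

Lemma rank_in_le (s : 'I_m) : rank_in s <= s.
Proof.
rewrite -[X in _ <= X](card_consec_prefix s).
by apply: subset_leq_card; apply/subsetP => y; rewrite !inE => /andP[_ ->].
Qed.

Lemma rank_in_ge (s : 'I_m) : s <= rank_in s + (m - #|J|).
Proof.
have card_compl : #|~: J| = m - #|J|.
  by have := cardsC J; rewrite card_ord; lia.
rewrite -card_compl -[X in X <= _](card_consec_prefix s).
apply: leq_trans (leq_card_setU _ _); apply: subset_leq_card.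
by apply/subsetP => y; rewrite !inE /= add0n => ->; rewrite andbT orbN.
Qed.

Lemma rank_in_mono (s s' : 'I_m) : s \in J -> s < s' -> rank_in s < rank_in s'.
Proof.
move=> Js lt_ss'; apply: proper_card; apply/properP; split.
  by apply/subsetP => y; rewrite !inE => /andP[-> /ltn_trans->].
by exists s; rewrite !inE ?Js ?lt_ss' ?ltnn.
Qed.

Lemma rank_in_lt_card (s : 'I_m) : s \in J -> rank_in s < #|J|.
Proof.
move=> Js; apply: proper_card; apply/properP; split.
  by apply/subsetP => y; rewrite inE => /andP[].
by exists s; rewrite // inE ltnn andbF.
Qed.

Lemma rank_in_inj : {in J &, injective rank_in}.
Proof.
move=> s s' Js Js'; case: (ltngtP s s') => [lt|lt|/val_inj //] eq_rank.
- by have := rank_in_mono Js lt; rewrite eq_rank ltnn.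
- by have := rank_in_mono Js' lt; rewrite eq_rank ltnn.
Qed.

Lemma rank_in_onto i : i < #|J| -> exists2 s, s \in J & rank_in s = i.
Proof.
move=> lt_iJ.
have [_ eq_ranks] : (size (image rank_in J) = size (iota 0 #|J|)) *
                    (image rank_in J =i iota 0 #|J|).
  apply: uniq_min_size.
  - by rewrite map_inj_in_uniq ?enum_uniq // => s s'; rewrite !mem_enum; apply: rank_in_inj.
  - by move=> _ /imageP[s Js ->]; rewrite mem_iota rank_in_lt_card.
  - by rewrite size_iota size_map -cardE.
have /imageP[s Js ->] : i \in image rank_in J by rewrite eq_ranks mem_iota.
by exists s.
Qed.

End Rank.

Definition residue_code (n m q r : nat) (s : 'I_m) : {set 'I_n} :=
  [set x : 'I_n | x %% q <= s <= x %% q + r].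
Arguments residue_code : clear implicits.

Lemma total_storage_residue_code n m q r : 0 < q -> q + r <= m ->
  total_storage (residue_code n m q r) = (r + 1) * n.
Proof.
move=> q_gt0 le_qr_m.
rewrite /total_storage sum_card_transpose mulnC -[n in RHS]card_ord -sum_nat_const.
apply: eq_bigr => x _.
have -> : [set s | x \in residue_code n m q r s] = consec m (x %% q) (r + 1).
  by apply/setP => s; rewrite !inE addnA addn1 ltnS.
by rewrite card_consec //; have := ltn_pmod x q_gt0; lia.
Qed.

Lemma residue_code_ecbc n m k t q r : 0 < q -> 0 < t -> k <= q * t -> q + r <= m ->
  ecbc_consec n m k t r (residue_code n m q r).
Proof.
move=> q_gt0 t_gt0 le_k_qt le_qr_m a c le_ck _ J le_J.
exists (fun s => [set x in consec n a c | x %% q == rank_in J s]); split.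
  move=> s _; split; last first.
    by apply: card_consec_residue_le => //; apply: leq_trans le_k_qt.
  apply/subsetP => x; rewrite !inE => /andP[_ /eqP->].
  rewrite rank_in_le; apply: leq_trans (rank_in_ge J s) _.
  by rewrite leq_add2l; lia.
apply/setP => x; apply/idP/bigcupP => [x_in | [s _]]; last by rewrite inE => /andP[].
have lt_rem_J : x %% q < #|J| by have := ltn_pmod x q_gt0; lia.
have [s Js rank_s] := rank_in_onto lt_rem_J.
by exists s; rewrite // inE x_in rank_s eqxx.
Qed.

Lemma ecbc_consec_replication n m k t r (S : 'I_m -> {set 'I_n}) x :
  0 < k -> ecbc_consec n m k t r S -> r < #|[set s | x \in S s]|.
Proof.
move=> k_gt0 code_S; rewrite ltnNge; apply/negP => few_copies.
have le_avail : m - r <= #|~: [set s | x \in S s]|.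
  by have := cardsC [set s | x \in S s]; rewrite card_ord; lia.
have x_fits : x + 1 <= n by rewrite addn1.
have [C [sub_C eq_x]] := code_S x 1 k_gt0 x_fits _ le_avail.
have : x \in consec n x 1 by rewrite inE leqnn addn1 ltnSn.
rewrite eq_x => /bigcupP[s avail_s x_Cs].
have [/subsetP/(_ x x_Cs) x_Ss _] := sub_C s avail_s.
by move: avail_s; rewrite !inE x_Ss.
Qed.

Lemma ecbc_consec_total_storage_ge n m k t r (S : 'I_m -> {set 'I_n}) :
  0 < k -> ecbc_consec n m k t r S -> (r + 1) * n <= total_storage S.
Proof.
move=> k_gt0 code_S; rewrite /total_storage sum_card_transpose.
rewrite mulnC -[n in n * _]card_ord -sum_nat_const; apply: leq_sum => x _.
by rewrite addn1; exact: ecbc_consec_replication code_S.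
Qed.

Lemma ceil_div_gt0 a b : 0 < a -> 0 < b -> 0 < ceil_div a b.
Proof. by move=> a_gt0 b_gt0; rewrite /ceil_div divn_gt0 //; lia. Qed.

Lemma leq_ceil_div_mul a b : 0 < b -> a <= ceil_div a b * b.
Proof.
move=> b_gt0; rewrite /ceil_div.
by have := divn_eq (a + b - 1) b; have := ltn_pmod (a + b - 1) b_gt0; lia.
Qed.

Theorem mainTheorem3 (n m k t r : nat) :
  1 <= n -> 1 <= m -> 1 <= k -> 1 <= t -> k <= n ->
  ceil_div k t + r <= m ->
  (exists S : 'I_m -> {set 'I_n},
      ecbc_consec n m k t r S /\ total_storage S = (r + 1) * n) /\
  (forall S : 'I_m -> {set 'I_n},
      ecbc_consec n m k t r S -> (r + 1) * n <= total_storage S).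
Proof.
move=> _ _ k_gt0 t_gt0 _ le_qr_m.
have q_gt0 := ceil_div_gt0 k_gt0 t_gt0.
split.
  exists (residue_code n m (ceil_div k t) r); split.
    exact: residue_code_ecbc (leq_ceil_div_mul k t_gt0) le_qr_m.
  exact: total_storage_residue_code.
by move=> S; apply: ecbc_consec_total_storage_ge.
Qed.
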